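(* For all $m,n\in\mathbb N^+$, the ideal $\langle X^m,Y^n\rangle$ is an atom of $\mathrm{Mon}(R)$.
   Context: Let $K$ be a field, $N\ge2$, $R=K[X_1,\dots,X_N]$, $X=X_1$, $Y=X_2$. $\mathrm{Mon}(R)$ is the monoid of nonzero monomial ideals of $R$ under ideal multiplication, with identity $R$ (its only unit); an atom of $\mathrm{Mon}(R)$ is an $I\ne R$ in $\mathrm{Mon}(R)$ not a product of two elements of $\mathrm{Mon}(R)\setminus\{R\}$. *)

From mathcomp Require Import all_boot all_algebra.
From mathcomp Require Import multinomials.mpoly.
Set Implicit Arguments. Unset Strict Implicit. Unset Printing Implicit Defensive.
Import GRing.Theory.
Local Open Scope ring_scope.

Section MonIdeals.
Variables (K : fieldType) (N : nat).
Notation R := {mpoly K[N]}.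

Definition is_ideal (I : R -> Prop) : Prop :=
  [/\ I 0, (forall p q, I p -> I q -> I (p + q)) & (forall r p, I p -> I (r * p))].

Definition ideal_gen (S : R -> Prop) : R -> Prop :=
  fun p => forall J, is_ideal J -> (forall s, S s -> J s) -> J p.

Definition is_monomial (p : R) : Prop := exists a : 'X_{1..N}, p = 'X_[a].

Definition monomial_ideal (I : R -> Prop) : Prop :=
  exists S : R -> Prop, (forall s, S s -> is_monomial s) /\
                        (forall p, I p <-> ideal_gen S p).

Definition inMon (I : R -> Prop) : Prop :=
  monomial_ideal I /\ exists p, I p /\ p != 0.

Definition ideal_mul (I J : R -> Prop) : R -> Prop :=
  ideal_gen (fun p => exists a b, [/\ I a, J b & p = a * b]).

Definition ideal_eq (I J : R -> Prop) : Prop := forall p, I p <-> J p.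

Definition unit_ideal : R -> Prop := fun _ => True.

Definition Mon_atom (I : R -> Prop) : Prop :=
  [/\ inMon I, ~ ideal_eq I unit_ideal &
      ~ exists J L, [/\ inMon J, inMon L, ~ ideal_eq J unit_ideal,
                        ~ ideal_eq L unit_ideal & ideal_eq I (ideal_mul J L)]].
End MonIdeals.

(* the variables X = X_1 and Y = X_2 (indices 0 and 1 in 'I_N) *)
Definition varX (N : nat) (hN : (1 < N)%N) : 'I_N := Ordinal (ltnW hN).
Definition varY (N : nat) (hN : (1 < N)%N) : 'I_N := Ordinal hN.

From mathcomp Require Import all_boot all_algebra.
From mathcomp Require Import multinomials.mpoly.
From mathcomp Require Import zify.
Set Implicit Arguments. Unset Strict Implicit.
Import GRing.Theory.
Local Open Scope ring_scope.

(* Membership in a monomial ideal is decided monomial by monomial, and every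
   element of <X^m, Y^n> only involves monomials divisible by X^m or by Y^n.
   If <X^m, Y^n> = J L with J, L proper monomial ideals, then writing X^m as a
   multiple of a product of monomials of J and L shows that J contains some
   X^a and L some X^b with a, b > 0 and a + b <= m; symmetrically J contains
   some Y^a' and L some Y^b' with a', b' > 0 and a' + b' <= n.  But then
   X^a Y^b' lies in J L although a < m and b' < n. *)

Section MonomialIdeals.
Variables (K : fieldType) (N : nat).
Notation R := {mpoly K[N]}.

Lemma ideal_gen_is_ideal (S : R -> Prop) : is_ideal (ideal_gen S).
Proof.
split.
- by move=> J [].
- move=> p q Hp Hq J iJ HS; have [_ HD _] := iJ.
  exact: HD (Hp J iJ HS) (Hq J iJ HS).
- move=> r p Hp J iJ HS; have [_ _ HM] := iJ; exact: HM (Hp J iJ HS).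
Qed.

Lemma ideal_gen_sub (S : R -> Prop) s : S s -> ideal_gen S s.
Proof. by move=> Ss J _ HS; apply: HS. Qed.

Lemma monomial_ideal_is_ideal (J : R -> Prop) : monomial_ideal J -> is_ideal J.
Proof.
move=> [S [_ HJ]]; have [H0 HD HM] := ideal_gen_is_ideal S; split.
- exact/HJ.
- by move=> p q /HJ Hp /HJ Hq; apply/HJ; apply: HD.
- by move=> r p /HJ Hp; apply/HJ; apply: HM.
Qed.

Lemma ideal_eq_unit (J : R -> Prop) :
  is_ideal J -> J 1 -> ideal_eq J (@unit_ideal K N).
Proof. by move=> [_ _ HM] J1 p; split=> // _; rewrite -[p]mulr1; apply: HM. Qed.

Lemma proper_ideal_power_gt0 (J : R -> Prop) (i : 'I_N) k :
  is_ideal J -> ~ ideal_eq J (@unit_ideal K N) -> J ('X_i ^+ k) -> (0 < k)%N.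
Proof.
case: k => [|k] iJ nJ // J1; exfalso; apply: nJ.
exact: ideal_eq_unit.
Qed.

Lemma msupp_upclosed_ideal (U : 'X_{1..N} -> Prop) :
  (forall v w, U w -> U (v + w)%MM) ->
  is_ideal (fun p : R => forall u, u \in msupp p -> U u).
Proof.
move=> HU; split.
- by move=> u; rewrite mcoeff_msupp mcoeff0 eqxx.
- by move=> p q Hp Hq u /msuppD_le; rewrite mem_cat => /orP [] => [/Hp | /Hq].
- move=> r p Hp u /msuppM_le /allpairsP [[v w] /= [_ Hw ->]].
  exact/HU/Hp.
Qed.

Lemma monomial_ideal_msupp (J : R -> Prop) p u :
  monomial_ideal J -> J p -> u \in msupp p -> J 'X_[u].
Proof.
move=> [S [HS HJ]] /HJ Jp Hu; apply/HJ.
have [_ _ HM] := ideal_gen_is_ideal S.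
move: u Hu; apply: (Jp (fun p => forall u, u \in msupp p -> ideal_gen S 'X_[u])).
- by apply: msupp_upclosed_ideal => v w Hw; rewrite mpolyXD; apply: HM.
- move=> _ /[dup] /HS [a ->] Sa u; rewrite msuppX inE => /eqP ->.
  exact: ideal_gen_sub.
Qed.

Lemma ideal_mul_msupp (J L : R -> Prop) p u :
  monomial_ideal J -> monomial_ideal L -> ideal_mul J L p -> u \in msupp p ->
  exists a b c, [/\ J 'X_[a], L 'X_[b] & u = (a + b + c)%MM].
Proof.
move=> mJ mL Hp; move: u.
apply: (Hp (fun p => forall u, u \in msupp p -> exists a b c,
                       [/\ J 'X_[a], L 'X_[b] & u = (a + b + c)%MM])).
- apply: msupp_upclosed_ideal => v w [a [b [c [Ja Lb ->]]]].
  by exists a, b, (c + v)%MM; split => //; apply/mnmP => i; rewrite !mnmDE; lia.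
- move=> s [a [b [Ja Lb ->]]] u /msuppM_le /allpairsP [[v w] /= [Hv Hw ->]].
  exists v, w, 0%MM; rewrite addm0; split => //.
  + exact: monomial_ideal_msupp Ja Hv.
  + exact: monomial_ideal_msupp Lb Hw.
Qed.

Lemma mnm_supported1 (i : 'I_N) (a : 'X_{1..N}) :
  (forall j, j != i -> a j = 0%N) -> a = (U_(i) *+ a i)%MM.
Proof.
move=> Ha; apply/mnmP => j; rewrite mulmnE mnm1E.
by case: eqP => [<- | /eqP ij]; rewrite ?mul1n // mul0n Ha // eq_sym.
Qed.

Lemma mnm_sum_eq_power (i : 'I_N) k (a b c : 'X_{1..N}) :
  (U_(i) *+ k)%MM = (a + b + c)%MM ->
  [/\ (a i + b i <= k)%N, forall j, j != i -> a j = 0%N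
    & forall j, j != i -> b j = 0%N].
Proof.
move=> E; have Ej j := congr1 (fun t : 'X_{1..N} => t j) E.
have off_i j : j != i -> (a j + b j + c j = 0)%N.
  by move=> /negbTE ij; move: (Ej j); rewrite /= mulmnE mnm1E eq_sym ij !mnmDE.
split => [| j /off_i | j /off_i]; try lia.
by move: (Ej i); rewrite /= mulmnE mnm1E eqxx !mnmDE; lia.
Qed.

Lemma ideal_mul_power (J L : R -> Prop) (i : 'I_N) k :
  monomial_ideal J -> monomial_ideal L ->
  ~ ideal_eq J (@unit_ideal K N) -> ~ ideal_eq L (@unit_ideal K N) ->
  ideal_mul J L ('X_i ^+ k) ->
  exists a b, [/\ (0 < a)%N, (0 < b)%N, (a + b <= k)%N,
                  J ('X_i ^+ a) & L ('X_i ^+ b)].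
Proof.
move=> mJ mL nJ nL JLk.
have := ideal_mul_msupp mJ mL JLk; rewrite mpolyXn msuppX.
move=> /(_ _ (mem_head _ _)) [a [b [c [Ja Lb /mnm_sum_eq_power [le_k Ha Hb]]]]].
rewrite (mnm_supported1 Ha) -mpolyXn in Ja.
rewrite (mnm_supported1 Hb) -mpolyXn in Lb.
exists (a i), (b i); split => //.
- exact: proper_ideal_power_gt0 (monomial_ideal_is_ideal mJ) nJ Ja.
- exact: proper_ideal_power_gt0 (monomial_ideal_is_ideal mL) nL Lb.
Qed.

Section PowerPairIdeal.
Variables (i j : 'I_N) (m n : nat).

Definition pow_pair_ideal : R -> Prop :=
  ideal_gen (fun p => p = 'X_i ^+ m \/ p = 'X_j ^+ n).

Lemma pow_pair_ideal_monomial : monomial_ideal pow_pair_ideal.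
Proof.
exists (fun p => p = 'X_i ^+ m \/ p = 'X_j ^+ n); split => // s.
by case=> ->; rewrite mpolyXn; eexists.
Qed.

Lemma pow_pair_ideal_msupp p u :
  pow_pair_ideal p -> u \in msupp p -> (m <= u i)%N \/ (n <= u j)%N.
Proof.
move=> Ip; move: u.
apply: (Ip (fun p => forall u, u \in msupp p -> (m <= u i)%N \/ (n <= u j)%N)).
- by apply: msupp_upclosed_ideal => v w; rewrite !mnmDE; lia.
- move=> s [->|->]; rewrite mpolyXn msuppX => u; rewrite inE => /eqP ->;
    [left | right]; by rewrite mulmnE mnm1E eqxx; lia.
Qed.

Lemma pow_pair_ideal_inMon : inMon pow_pair_ideal.
Proof.
split; first exact: pow_pair_ideal_monomial.
exists ('X_i ^+ m); split; first by apply: ideal_gen_sub; left.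
by rewrite mpolyXn -msupp_eq0 msuppX.
Qed.

Hypotheses (m_gt0 : (0 < m)%N) (n_gt0 : (0 < n)%N).

Lemma pow_pair_ideal_proper : ~ ideal_eq pow_pair_ideal (@unit_ideal K N).
Proof.
move=> /(_ 1) [_ /(_ I) /pow_pair_ideal_msupp]; rewrite -mpolyX0 msuppX.
by move=> /(_ _ (mem_head _ _)); rewrite !mnm0E; lia.
Qed.

Hypothesis (neq_ij : i != j).

Lemma pow_pair_ideal_not_product (J L : R -> Prop) :
  inMon J -> inMon L ->
  ~ ideal_eq J (@unit_ideal K N) -> ~ ideal_eq L (@unit_ideal K N) ->
  ~ ideal_eq pow_pair_ideal (ideal_mul J L).
Proof.
move=> [mJ _] [mL _] nJ nL E.
have JLx := (E _).1 (ideal_gen_sub (or_introl erefl) : pow_pair_ideal ('X_i ^+ m)).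
have JLy := (E _).1 (ideal_gen_sub (or_intror erefl) : pow_pair_ideal ('X_j ^+ n)).
have [a [b [_ b_gt0 le_abm Ja _]]] := ideal_mul_power mJ mL nJ nL JLx.
have [a' [b' [a'_gt0 _ le_abn _ Lb']]] := ideal_mul_power mJ mL nJ nL JLy.
have JLxy : ideal_mul J L ('X_i ^+ a * 'X_j ^+ b').
  by apply: ideal_gen_sub; exists ('X_i ^+ a), ('X_j ^+ b').
have := pow_pair_ideal_msupp ((E _).2 JLxy).
rewrite !mpolyXn -mpolyXD msuppX => /(_ _ (mem_head _ _)).
rewrite !mnmDE !mulmnE !mnm1E eqxx (negbTE neq_ij) eq_sym (negbTE neq_ij) eqxx.
lia.
Qed.

Lemma pow_pair_ideal_atom : Mon_atom pow_pair_ideal.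
Proof.
split; [exact: pow_pair_ideal_inMon | exact: pow_pair_ideal_proper |].
move=> [J [L [iJ iL nJ nL]]]; exact: pow_pair_ideal_not_product.
Qed.

End PowerPairIdeal.

End MonomialIdeals.

Theorem theorem4p9 (K : fieldType) (N : nat) (hN : (1 < N)%N) (m n : nat)
  (hm : (0 < m)%N) (hn : (0 < n)%N) :
  Mon_atom (ideal_gen (fun p : {mpoly K[N]} =>
              p = 'X_(varX hN) ^+ m \/ p = 'X_(varY hN) ^+ n)).
Proof. by apply: pow_pair_ideal_atom. Qed.
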